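(* For every positive integer $n$, \[ \sum_{k=1}^{n}(8k+1)\frac{(\tfrac{1}{2})_k(\tfrac{1}{4})_k(\tfrac{3}{4})_k}{k!^3}\frac{(\tfrac{1}{2}+n)_k(-n)_k}{(\tfrac{3}{2}+3n)_k(-3n)_k}\sum_{i=1}^{k}\left\{\frac{1}{(2i-1)^2}-\frac{1}{36i^2}\right\} =\frac{1}{9}\,\frac{(\tfrac{1}{2})_n^2(\tfrac{5}{6})_n(\tfrac{7}{6})_n}{n!^2(\tfrac{1}{3})_n(\tfrac{2}{3})_n}\sum_{j=1}^{2n}\frac{(-1)^{j-1}}{j^2}. \]
   Context: For a complex number $x$ and a nonnegative integer $n$, $(x)_n=x(x+1)\cdots(x+n-1)$ denotes the shifted factorial (Pochhammer symbol), with $(x)_0=1$. *)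

From mathcomp Require Import all_boot all_order all_algebra.
Set Implicit Arguments. Unset Strict Implicit. Unset Printing Implicit Defensive.
Import Order.TTheory GRing.Theory Num.Theory.
Local Open Scope ring_scope.

Definition poch {R : pzRingType} (x : R) (n : nat) : R :=
  \prod_(i < n) (x + i%:R).

(* Write t(n,k) for the hypergeometric summand, F(n,k) = (8k+1) t(n,k),
   H_k = sum_(i <= k) h(i) for the inner sum and Omega(n) for the Pochhammer
   quotient on the right; t(n,k) = 0 for k > n because of (-n)_k.
   Creative telescoping gives F(n+1,k) - c(n) F(n,k) = G(n,k+1) - G(n,k) with
   c(n) = Omega(n+1)/Omega(n) and G a rational multiple of t.  Abel summation
   against H turns it into S(n+1) = c(n) S(n) - W(n) for S(n) = sum_k F(n,k) H_k,
   where W(n) = sum_k G(n,k+1) h(k+1).  A second telescoping relation, whose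
   certificate involves h, shows that W(n) / (Omega(n+1) q(n)) is constant, q(n)
   being the increment of the alternating sum from 2n to 2n+2 terms; evaluating
   at n = 1 gives W(n) = - Omega(n+1) q(n) / 9, and induction on n closes the
   recurrence for S.  All identities are between rational functions of n and k,
   so the argument works over any real field. *)

From mathcomp Require Import all_boot all_order all_algebra.
From mathcomp Require Import ring lra.

Set Implicit Arguments.
Unset Strict Implicit.
Unset Printing Implicit Defensive.

Import Order.TTheory GRing.Theory Num.Theory.
Local Open Scope ring_scope.

Section Pochhammer.

Variable R : pzRingType.
Implicit Types (x : R) (k n : nat).

Lemma poch0 x : poch x 0 = 1.
Proof. by rewrite /poch big_ord0. Qed.

Lemma pochS x k : poch x k.+1 = poch x k * (x + k%:R).
Proof. by rewrite /poch big_ord_recr. Qed.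

Lemma pochSl x k : poch x k.+1 = x * poch (x + 1) k.
Proof.
rewrite /poch big_ord_recl addr0; congr (_ * _); apply: eq_bigr => i _.
by rewrite /= /bump add1n mulrS addrA.
Qed.

Lemma poch_opp_nat_eq0 n k : (n < k)%N -> poch (- n%:R) k = 0 :> R.
Proof.
move=> /subnKC <-; elim: (k - n.+1)%N => [|m IH]; last by rewrite addnS pochS IH mul0r.
by rewrite addn0 pochS addNr mulr0.
Qed.

End Pochhammer.

Lemma poch_addr1 (F : fieldType) (x : F) k :
  x != 0 -> poch (x + 1) k = poch x k * (x + k%:R) / x.
Proof. by move=> x_neq0; rewrite -[RHS]mulrC -pochS pochSl mulKf. Qed.

Lemma poch_neq0 (R : idomainType) (x : R) k :
  (forall i, (i < k)%N -> x + i%:R != 0) -> poch x k != 0.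
Proof. by move=> nz; rewrite /poch prodf_seq_neq0; apply/allP => i _; exact: nz. Qed.

Section PartialSums.

Variable R : pzRingType.

Definition psum (h : nat -> R) k : R := \sum_(1 <= i < k.+1) h i.

Lemma psum0 h : psum h 0 = 0.
Proof. by rewrite /psum big_geq. Qed.

Lemma psumS h k : psum h k.+1 = psum h k + h k.+1.
Proof. by rewrite /psum big_nat_recr. Qed.

Lemma sumr_creative_telescoping (c : R) (A1 A0 V : nat -> R) m :
  (forall k, (k < m)%N -> A1 k - c * A0 k = V k.+1 - V k) ->
  \sum_(0 <= k < m) A1 k = c * \sum_(0 <= k < m) A0 k + (V m - V 0).
Proof.
move=> tel; have := @telescope_sumr_eq _ 0 m V (fun k => A1 k - c * A0 k) (leq0n m) tel.
by rewrite sumrB -mulr_sumr => <-; rewrite addrC subrK.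
Qed.

Lemma sumr_psum_telescoping (c : R) (F1 F0 G h : nat -> R) m :
  (forall k, (k < m)%N -> F1 k - c * F0 k = G k.+1 - G k) ->
  \sum_(0 <= k < m) F1 k * psum h k
  = c * \sum_(0 <= k < m) F0 k * psum h k + G m * psum h m
    - \sum_(0 <= k < m) G k.+1 * h k.+1.
Proof.
move=> tel; rewrite -[LHS](addrK (\sum_(0 <= k < m) G k.+1 * h k.+1)) -big_split /=.
rewrite (@sumr_creative_telescoping c (fun k => F1 k * psum h k + G k.+1 * h k.+1)
  (fun k => F0 k * psum h k) (fun k => G k * psum h k)) /=.
  by rewrite psum0 mulr0 subr0.
move=> k /tel eqF.
by rewrite mulrA addrAC -mulrBl eqF psumS mulrDr mulrBl addrAC.
Qed.

End PartialSums.

Lemma expfS_eq0 (R : idomainType) (x : R) k : (x ^+ k.+1 == 0) = (x == 0).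
Proof. by rewrite expf_eq0. Qed.

Lemma natr_fact_neq0 (R : numDomainType) k : (k`!%:R : R) != 0.
Proof. by rewrite pnatr_eq0 -lt0n fact_gt0. Qed.

(* Side conditions of [field] below: every denominator is a product of affine
   forms in [n] and [k], each nonzero by [lra] from the bounds in the context. *)
Ltac field_neq0 :=
  repeat (apply/andP; split);
  first [ assumption | exact: natr_fact_neq0
        | rewrite ?(mulf_eq0, invr_eq0, expfS_eq0) ?negb_or;
          repeat (apply/andP; split); apply/eqP => ?; lra ].

Section SummationIdentity.

Variable R : realFieldType.
Implicit Types (n j k : nat).

Lemma natr_bounds n j : (0 < n)%N -> (j <= n)%N ->
  [/\ (1 : R) <= n%:R, (j%:R : R) <= n%:R & (0 : R) <= j%:R].
Proof. by move=> n_gt0 j_le_n; rewrite ler1n ler_nat ler0n. Qed.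

Definition hterm n k : R :=
  poch (1/2) k * poch (1/4) k * poch (3/4) k / (k`!%:R ^+ 3)
  * (poch (1/2 + n%:R) k * poch (- n%:R) k
     / (poch (3/2 + 3 * n%:R) k * poch (- (3 * n)%:R) k)).

Definition hterm_kratio n k : R :=
  (1/2 + k%:R) * (1/4 + k%:R) * (3/4 + k%:R) * ((1/2 + n%:R + k%:R) * (- n%:R + k%:R))
  / ((k%:R + 1) ^+ 3 * ((3/2 + 3 * n%:R + k%:R) * (- (3 * n)%:R + k%:R))).

Definition hterm_nratio n k : R :=
  (1/2 + n%:R + k%:R) / (1/2 + n%:R) * ((n%:R + 1) / (n%:R + 1 - k%:R))
  * ((3/2 + 3 * n%:R) * (5/2 + 3 * n%:R) * (7/2 + 3 * n%:R)
     / ((3/2 + 3 * n%:R + k%:R) * (5/2 + 3 * n%:R + k%:R) * (7/2 + 3 * n%:R + k%:R)))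
  * ((k%:R - 3 * n%:R - 3) * (k%:R - 3 * n%:R - 2) * (k%:R - 3 * n%:R - 1)
     / ((- 3 * n%:R - 3) * (- 3 * n%:R - 2) * (- 3 * n%:R - 1))).

Lemma hterm0 n : hterm n 0 = 1.
Proof. by rewrite /hterm !poch0 fact0; field. Qed.

Lemma htermS n k : hterm n k.+1 = hterm n k * hterm_kratio n k.
Proof.
rewrite /hterm /hterm_kratio !pochS factS natrM -(natr1 k) exprMn !invfM.
ring.
Qed.

Lemma hterm_eq0 n k : (n < k)%N -> hterm n k = 0.
Proof. by move=> lt_nk; rewrite /hterm poch_opp_nat_eq0 // mulr0 mul0r mulr0. Qed.

Lemma htermSn n k : (k <= n)%N -> hterm n.+1 k = hterm n k * hterm_nratio n k.
Proof.
(* Write the parameters at [n] and at [n.+1] as a common base plus 0 to 3,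
   so that [poch_addr1] relates the Pochhammer symbols of both sides. *)
move=> k_le_n; rewrite /hterm.
have n_ge0 : (0 : R) <= n%:R by rewrite ler0n.
have kn : (k%:R : R) <= n%:R by rewrite ler_nat.
have k_ge0 : (0 : R) <= k%:R by rewrite ler0n.
have -> : (1/2 + n.+1%:R : R) = (1/2 + n%:R) + 1 by rewrite -(natr1 n); ring.
have -> : (3/2 + 3 * n.+1%:R : R) = ((3/2 + 3 * n%:R) + 1) + 1 + 1 by rewrite -(natr1 n); ring.
have -> : (- n.+1%:R : R) = - (n%:R + 1) by rewrite -(natr1 n).
have -> : (- (3 * n.+1)%:R : R) = - (3 * n%:R + 3).
  by rewrite natrM -(natr1 n); congr (- _); ring.
have -> : (- n%:R : R) = - (n%:R + 1) + 1 by ring.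
have -> : (- (3 * n)%:R : R) = - (3 * n%:R + 3) + 1 + 1 + 1 by rewrite natrM; ring.
rewrite !poch_addr1; [|apply/eqP => ?; lra ..].
have : poch (3 / 2 + 3 * n%:R : R) k != 0.
  apply: poch_neq0 => i _; have i_ge0 : (0 : R) <= i%:R by rewrite ler0n.
  by apply/eqP => ?; lra.
have : poch (- (3 * n%:R + 3) : R) k != 0.
  apply: poch_neq0 => i lt_ik.
  have i_lt_n : (i%:R : R) + 1 <= n%:R by rewrite natr1 ler_nat (leq_trans lt_ik).
  by apply/eqP => ?; lra.
move: (poch (1 / 2 + n%:R) k) (poch (- (n%:R + 1)) k) => a b.
move: (poch (3 / 2 + 3 * n%:R) k) (poch (- (3 * n%:R + 3)) k) => c d d_neq0 c_neq0.
by rewrite /hterm_nratio; field; field_neq0.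
Qed.

Definition Omega n : R :=
  poch (1/2) n ^+ 2 * poch (5/6) n * poch (7/6) n
  / (n`!%:R ^+ 2 * poch (1/3) n * poch (2/3) n).

Definition omega_ratio n : R :=
  (n%:R + 1/2) ^+ 2 * (n%:R + 5/6) * (n%:R + 7/6)
  / ((n%:R + 1) ^+ 2 * (n%:R + 1/3) * (n%:R + 2/3)).

Lemma Omega0 : Omega 0 = 1.
Proof. by rewrite /Omega !poch0 fact0; field. Qed.

Lemma OmegaS n : Omega n.+1 = Omega n * omega_ratio n.
Proof.
rewrite /Omega /omega_ratio !pochS factS natrM -(natr1 n) !(addrC n%:R) !exprMn !invfM.
ring.
Qed.

Definition gcert_scale n : R :=
  (6 * n%:R + 5) * (6 * n%:R + 7) * (4 * n%:R + 3)
  / ((n%:R + 1) ^+ 2 * (3 * n%:R + 1) * (3 * n%:R + 2)).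

Definition gcert n k : R :=
  - 2 * gcert_scale n * (2 * k%:R - 1) * (k%:R - 1/2) * (k%:R - 3/4) * (k%:R - 1/4)
  * (k%:R - 1/2 + n%:R)
  / ((k%:R + 1/2 + 3 * n%:R) * (2 * k%:R + 6 * n%:R + 3) * (2 * k%:R + 6 * n%:R + 5)).

Definition fterm n k : R := (8 * k%:R + 1) * hterm n k.

Definition gterm n k : R := if k is k'.+1 then gcert n k * hterm n k' else 0.

Lemma fterm_telescoping n k : (0 < n)%N -> (k <= n.+1)%N ->
  fterm n.+1 k - omega_ratio n * fterm n k = gterm n k.+1 - gterm n k.
Proof.
move=> n_gt0; have n_ge1 : (1 : R) <= n%:R by rewrite ler1n.
case: k => [_ | j j_le_n].
  by rewrite /fterm /gterm !hterm0 /gcert /omega_ratio /gcert_scale; field; field_neq0.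
have [_ ? ?] := natr_bounds n_gt0 j_le_n.
rewrite /fterm /gterm !htermS htermSn //.
rewrite /hterm_nratio /hterm_kratio /gcert /omega_ratio /gcert_scale !natrM.
rewrite -?(natr1 n) -?(natr1 j.+1) -?(natr1 j).
move: (hterm n j) => t.
by field; field_neq0.
Qed.

Definition hweight k : R := 1 / ((2 * k%:R - 1) ^+ 2) - 1 / (36 * k%:R ^+ 2).

Definition altsum n : R := \sum_(1 <= j < (2 * n).+1) ((-1) ^+ j.-1 / (j%:R ^+ 2)).

Definition altsum_incr n : R := 1 / ((2 * n%:R + 1) ^+ 2) - 1 / ((2 * n%:R + 2) ^+ 2).

Lemma altsumS n : altsum n.+1 = altsum n + altsum_incr n.
Proof.
have n_ge0 : (0 : R) <= n%:R by rewrite ler0n.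
rewrite /altsum mulnS !add2n big_nat_recr // big_nat_recr //= /altsum_incr.
rewrite (exprS (-1 : R)) (mulnC 2 n) exprM sqrr_sign.
rewrite -(natr1 (n * 2).+1) -(natr1 (n * 2)) natrM.
by field; field_neq0.
Qed.

Lemma altsum_incr_neq0 n : altsum_incr n != 0.
Proof.
have n_ge0 : (0 : R) <= n%:R by rewrite ler0n.
have -> : altsum_incr n = (4 * n%:R + 3) / ((2 * n%:R + 1) ^+ 2 * (2 * n%:R + 2) ^+ 2).
  by rewrite /altsum_incr; field; field_neq0.
by field_neq0.
Qed.

Definition fsum n : R := \sum_(0 <= k < n.+1) fterm n k * psum hweight k.

Definition wterm n k : R := gcert n k.+1 * hterm n k * hweight k.+1.

Definition wsum n : R := \sum_(0 <= k < n.+2) wterm n k.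

Lemma fsumS n : (0 < n)%N -> fsum n.+1 = omega_ratio n * fsum n - wsum n.
Proof.
move=> n_gt0; rewrite /fsum.
rewrite (sumr_psum_telescoping (c := omega_ratio n) (F0 := fterm n) (G := gterm n)); last first.
  by move=> k; rewrite ltnS => /(fterm_telescoping n_gt0).
have -> : gterm n n.+2 = 0 by rewrite /gterm hterm_eq0 // mulr0.
by rewrite mul0r addr0 [in LHS]big_nat_recr //= /fterm hterm_eq0 // mulr0 mul0r addr0.
Qed.

Definition wsum_ratio n : R := omega_ratio n.+1 * altsum_incr n.+1 / altsum_incr n.

Definition vcert_scale n : R :=
  - 2 * (n%:R + 1) ^+ 2 * (6 * n%:R + 11) * (6 * n%:R + 13) * (4 * n%:R + 5) * (4 * n%:R + 7)
  / ((n%:R + 2) ^+ 4 * (3 * n%:R + 4) * (3 * n%:R + 5) * (4 * n%:R + 3)).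

Definition vcert n k : R :=
  vcert_scale n * (k%:R + 1) ^+ 2 * (2 * k%:R - 1) * (k%:R - 1/2) * (k%:R - 3/4) * (k%:R - 1/4)
  * (k%:R - 1/2 + n%:R)
  / ((8 * k%:R + 7) * (2 * k%:R + 6 * n%:R + 9) * (2 * k%:R + 6 * n%:R + 11) * k%:R ^+ 2
     * (k%:R + 1/2 + 3 * n%:R))
  * gcert n k.+1 * hweight k.+1.

Definition vterm n k : R := if k is k'.+1 then vcert n k * hterm n k' else 0.

(* Each of the four terms of [wterm_telescoping] at [k = j.+1] is
   [wfactor n j * hterm n j] times the polynomial [coef_*], and these polynomials
   sum to zero; splitting the identity this way keeps each [field] call small. *)
Definition wfactor n j : R :=
  (1/2 + j%:R) * (1/4 + j%:R) * (3/4 + j%:R) * (1/2 + n%:R + j%:R)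
  / ((j%:R + 1) ^+ 3 * (3/2 + 3 * n%:R + j%:R) * (- (3 * n%:R) + j%:R))
  * ((n%:R + 1) ^+ 2 * (4 * n%:R + 7) * (6 * n%:R + 11) * (6 * n%:R + 13)
     / ((n%:R + 2) ^+ 4 * (4 * n%:R + 3) * (3 * n%:R + 4) * (3 * n%:R + 5)
        * (2 * j%:R + 6 * n%:R + 11) * (2 * j%:R + 6 * n%:R + 13) * (8 * j%:R + 15)
        * (2 * j%:R + 6 * n%:R + 15))).

Definition coef_wtermSn n j : R :=
  (j%:R - 3 * n%:R - 2) * (j%:R - 3 * n%:R - 1) * (j%:R - 3 * n%:R) * (n%:R + 2) ^+ 2
  * (2 * j%:R + 2 * n%:R + 5) * (8 * j%:R + 15).

Definition coef_wterm n j : R :=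
  - (1/16) * (j%:R - n%:R) * (2 * n%:R + 1) ^+ 2 * (2 * j%:R + 6 * n%:R + 11)
  * (2 * j%:R + 6 * n%:R + 13) * (8 * j%:R + 15) * (2 * j%:R + 6 * n%:R + 15).

Definition coef_vtermS n j : R :=
  (1/16) * (j%:R - n%:R) * (2 * j%:R + 3) ^+ 2 * (2 * j%:R + 2 * n%:R + 5) * (4 * n%:R + 5)
  * (4 * j%:R + 11) * (4 * j%:R + 13).

Definition coef_vterm n j : R :=
  - 2 * (j%:R - 3 * n%:R) * (j%:R + 1) * (2 * j%:R + 1) * (j%:R + 2) ^+ 2 * (4 * n%:R + 5)
  * (2 * j%:R + 6 * n%:R + 15).

Lemma coef_vterm_eq n j :
  coef_vterm n j = - (coef_wtermSn n j + coef_wterm n j + coef_vtermS n j).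
Proof. by rewrite /coef_vterm /coef_wtermSn /coef_wterm /coef_vtermS; field. Qed.

Lemma gcert_hweightS n j :
  gcert n j.+3 * hweight j.+3 = gcert n j.+2 * hweight j.+2 *
   ((j%:R + 2) ^+ 2 * (2 * j%:R + 2 * n%:R + 5) * (2 * j%:R + 6 * n%:R + 5)
    * (4 * j%:R + 11) * (4 * j%:R + 13) * (8 * j%:R + 23)
    / ((j%:R + 3) ^+ 2 * (2 * j%:R + 2 * n%:R + 3) * (4 * j%:R + 5) * (4 * j%:R + 7)
       * (2 * j%:R + 6 * n%:R + 11) * (8 * j%:R + 15))).
Proof.
have n_ge0 : (0 : R) <= n%:R by rewrite ler0n.
have j_ge0 : (0 : R) <= j%:R by rewrite ler0n.
rewrite /gcert /hweight; move: (gcert_scale n) => kv.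
rewrite -?(natr1 j.+2) -?(natr1 j.+1) -?(natr1 j).
by field; field_neq0.
Qed.

Section WFactors.

Variables (n j : nat) (t : R).
Hypotheses (n_gt0 : (0 < n)%N) (j_le_n : (j <= n)%N).

Lemma wtermSn_factor :
  gcert n.+1 j.+2 * (t * hterm_nratio n j * hterm_kratio n.+1 j) * hweight j.+2
  = gcert n j.+2 * hweight j.+2 * t * wfactor n j * coef_wtermSn n j.
Proof.
have [? ? ?] := natr_bounds n_gt0 j_le_n; move: (hweight j.+2) => hv.
rewrite /gcert /hterm_nratio /hterm_kratio /wfactor /coef_wtermSn /gcert_scale ?natrM.
rewrite -?(natr1 n) -?(natr1 j.+1) -?(natr1 j).
by field; field_neq0.
Qed.

Lemma wterm_factor :
  wsum_ratio n * (gcert n j.+2 * (t * hterm_kratio n j) * hweight j.+2)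
  = - (gcert n j.+2 * hweight j.+2 * t * wfactor n j * coef_wterm n j).
Proof.
have [? ? ?] := natr_bounds n_gt0 j_le_n; move: (hweight j.+2) (gcert n j.+2) => hv gv.
rewrite /wsum_ratio /omega_ratio /altsum_incr /hterm_kratio /wfactor /coef_wterm ?natrM.
rewrite -?(natr1 n) -?(natr1 j.+1) -?(natr1 j).
by field; field_neq0.
Qed.

Lemma vtermS_factor :
  vcert n j.+2 * (t * hterm_kratio n j)
  = - (gcert n j.+2 * hweight j.+2 * t * wfactor n j * coef_vtermS n j).
Proof.
have [? ? ?] := natr_bounds n_gt0 j_le_n.
rewrite /vcert -(mulrA _ (gcert n j.+3)) gcert_hweightS.
move: (hweight j.+2) (gcert n j.+2) => hv gv.
rewrite /vcert_scale /hterm_kratio /wfactor /coef_vtermS ?natrM.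
rewrite -?(natr1 n) -?(natr1 j.+2) -?(natr1 j.+1) -?(natr1 j).
by field; field_neq0.
Qed.

Lemma vterm_factor :
  vcert n j.+1 * t = gcert n j.+2 * hweight j.+2 * t * wfactor n j * coef_vterm n j.
Proof.
have [? ? ?] := natr_bounds n_gt0 j_le_n.
rewrite /vcert; move: (hweight j.+2) (gcert n j.+2) => hv gv.
rewrite /vcert_scale /wfactor /coef_vterm ?natrM -?(natr1 n) -?(natr1 j).
by field; field_neq0.
Qed.

End WFactors.

Lemma wterm_telescoping n k : (0 < n)%N -> (k <= n.+2)%N ->
  wterm n.+1 k - wsum_ratio n * wterm n k = vterm n k.+1 - vterm n k.
Proof.
move=> n_gt0; have n_ge1 : (1 : R) <= n%:R by rewrite ler1n.
case: k => [_ | j]; rewrite /wterm /vterm.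
  rewrite !hterm0 subr0 /vcert /wsum_ratio /gcert /omega_ratio /gcert_scale /hweight.
  rewrite /vcert_scale /altsum_incr -(natr1 n) -?(natr1 1) -?(natr1 0) ?mulr0n.
  by field; field_neq0.
rewrite ltnS leq_eqVlt => /predU1P[-> | j_le_n].
  by rewrite !hterm_eq0 // !mulr0 !mul0r mulr0 subrr.
rewrite !htermS htermSn // wtermSn_factor // wterm_factor // vtermS_factor // vterm_factor //.
by rewrite coef_vterm_eq; ring.
Qed.

Lemma wsumS n : (0 < n)%N -> wsum n.+1 = wsum_ratio n * wsum n.
Proof.
move=> n_gt0; rewrite /wsum.
rewrite (sumr_creative_telescoping (c := wsum_ratio n) (A0 := wterm n) (V := vterm n)).
  by rewrite [in LHS]big_nat_recr //= /wterm /vterm hterm_eq0 // !mulr0 !mul0r subr0 !addr0.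
by move=> k; rewrite ltnS => /(wterm_telescoping n_gt0).
Qed.

Lemma wsum_closed n : (0 < n)%N -> wsum n = - Omega n.+1 / 9 * altsum_incr n.
Proof.
case: n => // m _; elim: m => [|m IH].
  rewrite /wsum !big_nat_recr //= big_geq // /wterm (hterm_eq0 (k := 2)) // htermS hterm0.
  rewrite !OmegaS Omega0 /gcert /hterm_kratio /hweight /omega_ratio /gcert_scale.
  by rewrite /altsum_incr; field.
rewrite wsumS // IH /wsum_ratio (OmegaS m.+2).
by field; rewrite altsum_incr_neq0.
Qed.

Lemma fsum_closed n : (0 < n)%N -> fsum n = 1/9 * Omega n * altsum n.
Proof.
case: n => // m _; elim: m => [|m IH].
  rewrite /fsum !big_nat_recr //= big_geq // psum0 psumS psum0 altsumS.
  rewrite /altsum big_geq // OmegaS Omega0 /fterm htermS hterm0.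
  by rewrite /hterm_kratio /hweight /omega_ratio /altsum_incr; field.
by rewrite fsumS // IH wsum_closed // (OmegaS m.+1) (altsumS m.+1); ring.
Qed.

End SummationIdentity.

Theorem mainTheorem8 (n : nat) : (0 < n)%N ->
  \sum_(1 <= k < n.+1)
     (8 * k%:R + 1 : rat)
     * (poch (1/2) k * poch (1/4) k * poch (3/4) k / (k`!%:R ^+ 3))
     * (poch (1/2 + n%:R) k * poch (- n%:R) k
        / (poch (3/2 + 3 * n%:R) k * poch (- (3 * n)%:R) k))
     * \sum_(1 <= i < k.+1)
         (1 / ((2 * i%:R - 1) ^+ 2) - 1 / (36 * i%:R ^+ 2))
  = 1/9 * (poch (1/2 : rat) n ^+ 2 * poch (5/6) n * poch (7/6) n
           / (n`!%:R ^+ 2 * poch (1/3) n * poch (2/3) n))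
    * \sum_(1 <= j < (2 * n).+1) ((-1) ^+ j.-1 / (j%:R ^+ 2)).
Proof.
move=> n_gt0; rewrite -[RHS](@fsum_closed rat n n_gt0) /fsum [RHS]big_ltn // psum0 mulr0 add0r.
by apply: eq_bigr => k _; rewrite /fterm /hterm [in RHS](mulrA (8 * k%:R + 1)).
Qed.
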